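(* Let $\beta_{ij}$ ($i\neq j$, $i,j=1,\dots,N$) be smooth functions of $\boldsymbol u=(u_1,\dots,u_N)$ satisfying the Lamé equations $$\frac{\partial\beta_{ij}}{\partial u_k}=\beta_{ik}\beta_{kj}\ (i,j,k \text{ distinct}),\qquad \frac{\partial\beta_{ij}}{\partial u_i}+\frac{\partial\beta_{ji}}{\partial u_j}+\sum_{k\neq i,j}\beta_{ki}\beta_{kj}=0\ (i\neq j).$$ Let $\boldsymbol\xi_i$ ($\mathbb R^M$-valued) and $\boldsymbol\zeta_i$ ($\mathbb R^L$-valued) satisfy $\frac{\partial\boldsymbol\xi_j}{\partial u_i}=\beta_{ji}\boldsymbol\xi_i$, $\frac{\partial\boldsymbol\zeta_j}{\partial u_i}=\beta_{ji}\boldsymbol\zeta_i$ for $i\neq j$, and set $\boldsymbol\xi^*_i=\big(\frac{\partial\boldsymbol\xi_i}{\partial u_i}+\sum_{k\neq i}\boldsymbol\xi_k\beta_{ki}\big)^{T}$, $\boldsymbol\zeta^*_i=\big(\frac{\partial\boldsymbol\zeta_i}{\partial u_i}+\sum_{k\neq i}\boldsymbol\zeta_k\beta_{ki}\big)^{T}$. Let $\Omega(\boldsymbol\xi,\boldsymbol\xi^* )$ ($M\times M$), $\Omega(\boldsymbol\xi,\boldsymbol\zeta^* )$ ($M\times L$), $\Omega(\boldsymbol\zeta,\boldsymbol\xi^* )$ ($L\times M$) be matrix functions with $\partial_{u_i}\Omega(\boldsymbol a,\boldsymbol b^* )=\boldsymbol a_i\boldsymbol b^*_i$ for all $i$ (for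 each of the three pairs $(\boldsymbol a,\boldsymbol b)$), such that $\Omega(\boldsymbol\xi,\boldsymbol\xi^* )$ is invertible and $$\Omega(\boldsymbol\xi,\boldsymbol\zeta^* )+\Omega(\boldsymbol\zeta,\boldsymbol\xi^* )^{T}=\sum_{k=1}^N\boldsymbol\xi_k\boldsymbol\zeta_k^{T},\qquad \Omega(\boldsymbol\xi,\boldsymbol\xi^* )+\Omega(\boldsymbol\xi,\boldsymbol\xi^* )^{T}=\sum_{k=1}^N\boldsymbol\xi_k\boldsymbol\xi_k^{T}.$$ Define $$\hat\beta_{ij}=\beta_{ij}-\boldsymbol\xi^*_j\,\Omega(\boldsymbol\xi,\boldsymbol\xi^* )^{-1}\boldsymbol\xi_i,\quad \hat{\boldsymbol\zeta}_i=\boldsymbol\zeta_i-\Omega(\boldsymbol\zeta,\boldsymbol\xi^* )\Omega(\boldsymbol\xi,\boldsymbol\xi^* )^{-1}\boldsymbol\xi_i,\quad \hat{\boldsymbol\zeta}^*_i=\boldsymbol\zeta^*_i-\boldsymbol\xi^*_i\,\Omega(\boldsymbol\xi,\boldsymbol\xi^* )^{-1}\Omega(\boldsymbol\xi,\boldsymbol\zeta^* ).$$ Then for every $i=1,\dots,N$, $$\hat{\boldsymbol\zeta}^*_i=\Big(\frac{\partial\hat{\boldsymbol\zeta}_i}{\partial u_i}+\sum_{k\neq i}\hat{\boldsymbol\zeta}_k\hat\beta_{ki}\Big)^{T}.$$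
   Context: Vectors are columns, starred quantities are row vectors, ${}^T$ is transpose, and $\boldsymbol a_i\boldsymbol b^*_i$ is the outer (column times row) product. All functions are smooth on an open domain of $\mathbb R^N$. *)

From HB Require Import structures.
From mathcomp Require Import all_boot all_order all_algebra.
From mathcomp Require Import all_classical all_reals all_analysis.
Set Implicit Arguments. Unset Strict Implicit. Unset Printing Implicit Defensive.
Import Order.TTheory GRing.Theory Num.Theory.
Import numFieldNormedType.Exports.
Local Open Scope classical_set_scope.
Local Open Scope ring_scope.

Section Defs.
Variables (R : realType) (N : nat).

Definition ebasis (i : 'I_N) : 'rV[R]_N := delta_mx 0 i.

Definition partial (W : normedModType R) (f : 'rV[R]_N -> W) (i : 'I_N)
  : 'rV[R]_N -> W := fun x => 'D_(ebasis i) f x.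

Definition ipartial (W : normedModType R) (s : seq 'I_N) (f : 'rV[R]_N -> W)
  : 'rV[R]_N -> W := foldr (fun j g => partial g j) f s.

Definition smooth_on (W : normedModType R) (D : set 'rV[R]_N)
  (f : 'rV[R]_N -> W) : Prop :=
  forall s : seq 'I_N, forall x, D x ->
    {for x, continuous (ipartial s f)} /\
    forall i : 'I_N, derivable (ipartial s f) x (ebasis i).

Definition star (m : nat) (beta : 'I_N -> 'I_N -> 'rV[R]_N -> R)
  (b : 'I_N -> 'rV[R]_N -> 'cV[R]_m) (i : 'I_N) (x : 'rV[R]_N) : 'rV[R]_m :=
  (partial (b i) i x + \sum_(k < N | k != i) beta k i x *: b k x)^T.

End Defs.

From HB Require Import structures.
From mathcomp Require Import all_boot all_order all_algebra.
From mathcomp Require Import perm.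
From mathcomp Require Import all_classical all_reals all_analysis.
From mathcomp Require Import ring.
Set Implicit Arguments. Unset Strict Implicit. Unset Printing Implicit Defensive.
Import Order.TTheory GRing.Theory Num.Theory.
Import numFieldNormedType.Exports.
Local Open Scope classical_set_scope.
Local Open Scope ring_scope.

(* With d(A^-1) = -A^-1 (dA) A^-1,
   the derivative of hzeta_i = zeta_i - Ozx Oxx^-1 xi_i turns the claim into a
   pointwise matrix identity.  Put c_k = xi*_i Oxx^-1 xi_k; the i-th terms of
   the derivative merge with the sum over k <> i into sum_k c_k hzeta_k, and the
   two symmetry relations collapse this full sum, because
   Oxx^-1 (Oxx + Oxx^T) Oxx^-T = Oxx^-1 + Oxx^-T. *)

Section MatrixDerivative.
Variables (R : realFieldType) (V : normedModType R).
Implicit Types (x v : V).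

Lemma derivable_mulmx m n p (A : V -> 'M[R]_(m, n)) (B : V -> 'M[R]_(n, p)) x v :
  derivable A x v -> derivable B x v -> derivable (fun y => A y *m B y) x v.
Proof.
move=> /derivable_mxP dA /derivable_mxP dB; apply/derivable_mxP => i j.
rewrite (_ : (fun y => _) = \sum_k (fun y => A y i k * B y k j)); last first.
  by apply/funext => y; rewrite mxE fct_sumE.
apply: derivable_sum => k.
exact: derivableM.
Qed.

Lemma derive_mulmx m n p (A : V -> 'M[R]_(m, n)) (B : V -> 'M[R]_(n, p)) x v :
  derivable A x v -> derivable B x v ->
  'D_v (fun y => A y *m B y) x = 'D_v A x *m B x + A x *m 'D_v B x.
Proof.
move=> dA dB; rewrite derive_mx; last exact: derivable_mulmx.
rewrite (derive_mx dA) (derive_mx dB).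
move/derivable_mxP: dA => dA; move/derivable_mxP: dB => dB.
apply/matrixP => i j; rewrite !mxE -big_split /=.
rewrite (_ : (fun y => _) = \sum_k (fun y => A y i k * B y k j)); last first.
  by apply/funext => y; rewrite mxE fct_sumE.
rewrite derive_sum => [|k]; last exact: derivableM.
apply: eq_bigr => k _.
by rewrite deriveM // !mxE [LHS]addrC; congr (_ + _); exact: mulrC.
Qed.

Lemma derivable_det n (A : V -> 'M[R]_n) x v :
  derivable A x v -> derivable (fun y => \det (A y)) x v.
Proof.
move/derivable_mxP => dA.
rewrite (_ : (fun y => _) = \sum_(s : 'S_n)
    (cst ((-1) ^+ s) * \prod_i (fun y => A y i (s i)))); last first.
  apply/funext => y; rewrite fct_sumE.
  by apply: eq_bigr => s _; rewrite fct_prodE.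
elim/big_ind: _ => [|f g|s _]; [exact: derivable_cst | exact: derivableD |].
apply: derivableM; first exact: derivable_cst.
elim/big_ind: _ => [|f g|i _]; [exact: derivable_cst | exact: derivableM |].
exact: dA.
Qed.

Lemma derivable_invmx n (A : V -> 'M[R]_n) x v :
  (\forall y \near x, A y \in unitmx) -> derivable A x v ->
  derivable (fun y => invmx (A y)) x v.
Proof.
move=> uA dA; have detAx : \det (A x) != 0.
  by rewrite -unitfE -unitmxE; exact: nbhs_singleton uA.
apply: (@near_eq_derivable _ _ _ (fun y => (\det (A y))^-1 *: \adj (A y))).
  by near=> y; rewrite /invmx (near uA y).
apply/derivable_mxP => i j.
rewrite (_ : (fun y => _) = (fun y => (\det (A y))^-1) *
    (cst ((-1) ^+ (j + i)) * (fun y => \det (row' j (col' i (A y)))))); last first.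
  by apply/funext => y; rewrite !mxE.
apply: derivableM; first exact/derivableV/derivable_det.
apply: derivableM; first exact: derivable_cst.
apply: derivable_det; apply/derivable_mxP => k l.
move/derivable_mxP: dA; under [fun y => _]funext do rewrite !mxE.
by apply.
Unshelve. all: by end_near. Qed.

Lemma derive_invmx n (A : V -> 'M[R]_n) x v :
  (\forall y \near x, A y \in unitmx) -> derivable A x v ->
  'D_v (fun y => invmx (A y)) x = - (invmx (A x) *m 'D_v A x *m invmx (A x)).
Proof.
move=> uA dA; have uAx : A x \in unitmx := nbhs_singleton uA.
have dinvA := derivable_invmx uA dA.
have : 'D_v (fun y => invmx (A y) *m A y) x = 0.
  rewrite (@near_eq_derive _ _ _ _ (cst 1%:M)) ?derive_cst //.
  by near=> y; rewrite mulVmx // (near uA y).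
rewrite derive_mulmx // => /(congr1 (mulmx^~ (invmx (A x)))).
by rewrite mul0mx mulmxDl mulmxK // => /eqP; rewrite addr_eq0 => /eqP ->.
Unshelve. all: by end_near. Qed.

Lemma derive_mulmx_invmx m n p (B : V -> 'M[R]_(m, n)) (A : V -> 'M[R]_n)
    (C : V -> 'M[R]_(n, p)) x v :
  (\forall y \near x, A y \in unitmx) ->
  derivable B x v -> derivable A x v -> derivable C x v ->
  'D_v (fun y => B y *m invmx (A y) *m C y) x =
  'D_v B x *m invmx (A x) *m C x
  - B x *m invmx (A x) *m 'D_v A x *m invmx (A x) *m C x
  + B x *m invmx (A x) *m 'D_v C x.
Proof.
move=> uA dB dA dC; have dinvA := derivable_invmx uA dA.
rewrite (derive_mulmx (derivable_mulmx dB dinvA) dC).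
rewrite (derive_mulmx dB dinvA) (derive_invmx uA dA).
by rewrite mulmxDl mulmxN mulNmx !mulmxA.
Qed.

End MatrixDerivative.

Section DressingIdentity.
Variables (R : comPzRingType) (N M L : nat).
Variables (a : 'I_N -> 'cV[R]_M) (b : 'I_N -> 'cV[R]_L).
Variables (O P : 'M[R]_M) (W : 'M[R]_(M, L)) (Z : 'M[R]_(L, M)).
Hypotheses (PO : P *m O = 1%:M)
  (W_Z_outer : W + Z^T = \sum_k a k *m (b k)^T)
  (O_outer : O + O^T = \sum_k a k *m (a k)^T).

Lemma mulmx_sum_outer_dressed :
  P *m \sum_k a k *m (b k - Z *m P *m a k)^T = P *m W - P^T *m Z^T.
Proof.
have -> : \sum_k a k *m (b k - Z *m P *m a k)^T
    = W + Z^T - (O + O^T) *m P^T *m Z^T.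
  rewrite W_Z_outer O_outer !mulmx_suml -sumrB; apply: eq_bigr => k _.
  by rewrite linearB /= mulmxBr !trmx_mul !mulmxA.
have POt : P *m O^T *m P^T = P by rewrite -mulmxA -trmx_mul PO trmx1 mulmx1.
rewrite mulmxBr !mulmxDl !mulmxDr !mulmxA PO mul1mx POt.
by rewrite opprD addrACA subrr addr0.
Qed.

Variables (i : 'I_N) (bet : 'I_N -> R) (da : 'cV[R]_M) (db : 'cV[R]_L).
Variables (a_star : 'rV[R]_M) (b_star : 'rV[R]_L).
Hypotheses (a_starE : a_star = (da + \sum_(k < N | k != i) bet k *: a k)^T)
  (b_starE : b_star = (db + \sum_(k < N | k != i) bet k *: b k)^T).

Lemma dressed_star_identity :
  b_star - a_star *m P *m W =
  (db - (b i *m a_star *m P *m a i - Z *m P *m (a i *m a_star) *m P *m a i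
         + Z *m P *m da)
   + \sum_(k < N | k != i)
       (bet k - (a_star *m P *m a k) 0 0) *: (b k - Z *m P *m a k))^T.
Proof.
pose c k := (a_star *m P *m a k) 0 0.
pose h k := b k - Z *m P *m a k.
have col_c k p (u : 'cV[R]_p) : u *m (a_star *m P *m a k) = c k *: u.
  by rewrite [X in _ *m X]mx11_scalar mul_mx_scalar.
have row_c k p (u : 'rV[R]_p) : (a_star *m P *m a k) *m u = c k *: u.
  by rewrite [X in X *m _]mx11_scalar mul_scalar_mx.
have term_i : b i *m a_star *m P *m a i - Z *m P *m (a i *m a_star) *m P *m a i
    = c i *: h i.
  by rewrite scalerBr -!col_c !mulmxA.
have sum_bet : \sum_(k < N | k != i) bet k *: h k
    = b_star^T - db - Z *m P *m (a_star^T - da).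
  rewrite a_starE b_starE !trmxK [db + _]addrC [da + _]addrC !addrK.
  rewrite mulmx_sumr -sumrB.
  by apply: eq_bigr => k _; rewrite scalerBr scalemxAr.
have sum_c : \sum_k c k *: h k = (a_star *m P *m W - a_star *m P^T *m Z^T)^T.
  rewrite (eq_bigr (fun k => (a_star *m P *m (a k *m (h k)^T))^T)); last first.
    by move=> k _; rewrite mulmxA row_c linearZ /= trmxK.
  rewrite -linear_sum /= -mulmx_sumr -mulmxA mulmx_sum_outer_dressed.
  by rewrite mulmxBr !mulmxA.
rewrite term_i (eq_bigr (fun k => bet k *: h k - c k *: h k)); last first.
  by move=> k _; rewrite scalerBl.
rewrite sumrB sum_bet.
move: sum_c; rewrite (bigD1 i) //= => /(canRL (addKr _)) ->.
apply: trmx_inj; rewrite trmxK !linearB /= !trmx_mul !trmxK !mulmxA.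
move: (b_star^T) (W^T *m P^T *m a_star^T) (Z *m P *m a_star^T) (Z *m P *m da)
  (c i *: b i) (c i *: (Z *m P *m a i)) db => B T X Y U U' d.
by apply/matrixP => r s; rewrite !mxE; ring.
Qed.

End DressingIdentity.

Theorem lemma3 (R : realType) (N M L : nat) (D : set 'rV[R]_N)
  (beta : 'I_N -> 'I_N -> 'rV[R]_N -> R)
  (xi : 'I_N -> 'rV[R]_N -> 'cV[R]_M) (zeta : 'I_N -> 'rV[R]_N -> 'cV[R]_L)
  (Oxx : 'rV[R]_N -> 'M[R]_(M, M)) (Oxz : 'rV[R]_N -> 'M[R]_(M, L))
  (Ozx : 'rV[R]_N -> 'M[R]_(L, M)) :
  open D ->
  (forall i j : 'I_N, i != j -> smooth_on D (beta i j)) ->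
  (forall i : 'I_N, smooth_on D (xi i)) ->
  (forall i : 'I_N, smooth_on D (zeta i)) ->
  smooth_on D Oxx -> smooth_on D Oxz -> smooth_on D Ozx ->
  (* Lame equations *)
  (forall i j k : 'I_N, i != j -> j != k -> i != k -> forall x, D x ->
     partial (beta i j) k x = beta i k x * beta k j x) ->
  (forall i j : 'I_N, i != j -> forall x, D x ->
     partial (beta i j) i x + partial (beta j i) j x
     + \sum_(k < N | (k != i) && (k != j)) beta k i x * beta k j x = 0) ->
  (* equations for xi and zeta *)
  (forall i j : 'I_N, i != j -> forall x, D x ->
     partial (xi j) i x = beta j i x *: xi i x) ->
  (forall i j : 'I_N, i != j -> forall x, D x ->
     partial (zeta j) i x = beta j i x *: zeta i x) ->
  (* derivatives of the Omega's *)
  (forall i : 'I_N, forall x, D x ->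
     partial Oxx i x = xi i x *m star beta xi i x) ->
  (forall i : 'I_N, forall x, D x ->
     partial Oxz i x = xi i x *m star beta zeta i x) ->
  (forall i : 'I_N, forall x, D x ->
     partial Ozx i x = zeta i x *m star beta xi i x) ->
  (forall x, D x -> Oxx x \in unitmx) ->
  (forall x, D x ->
     Oxz x + (Ozx x)^T = \sum_(k < N) xi k x *m (zeta k x)^T) ->
  (forall x, D x ->
     Oxx x + (Oxx x)^T = \sum_(k < N) xi k x *m (xi k x)^T) ->
  let hbeta := fun (i j : 'I_N) x =>
    beta i j x - (star beta xi j x *m invmx (Oxx x) *m xi i x) 0 0 in
  let hzeta := fun (i : 'I_N) x =>
    zeta i x - Ozx x *m invmx (Oxx x) *m xi i x in
  let hzetastar := fun (i : 'I_N) x =>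
    star beta zeta i x - star beta xi i x *m invmx (Oxx x) *m Oxz x in
  forall (i : 'I_N) x, D x ->
    hzetastar i x
    = (partial (hzeta i) i x + \sum_(k < N | k != i) hbeta k i x *: hzeta k x)^T.
Proof.
move=> oD _ sxi szeta sOxx _ sOzx _ _ _ _ dOxx _ dOzx uO Oxz_Ozx Oxx_sym
  hbeta hzeta hzetastar i x Dx.
have der (W : normedModType R) (f : 'rV[R]_N -> W) :
    smooth_on D f -> derivable f x (ebasis R i).
  by move=> sf; exact: (sf [::] x Dx).2 i.
have uOx : \forall y \near x, Oxx y \in unitmx.
  by apply: filterS (open_nbhs_nbhs (conj oD Dx)); exact: uO.
rewrite /hzetastar /hbeta /hzeta /partial.
have -> : (fun y => zeta i y - Ozx y *m invmx (Oxx y) *m xi i y)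
  = zeta i - (fun y => Ozx y *m invmx (Oxx y) *m xi i y) by [].
rewrite deriveB; first last.
- apply: derivable_mulmx (der _ _ (sxi i)).
  exact: derivable_mulmx (der _ _ sOzx) (derivable_invmx uOx (der _ _ sOxx)).
- exact: der.
rewrite (derive_mulmx_invmx uOx (der _ _ sOzx) (der _ _ sOxx)
  (der _ _ (sxi i))).
rewrite -[ 'D_(ebasis R i) Ozx x]/(partial Ozx i x) dOzx //.
rewrite -[ 'D_(ebasis R i) Oxx x]/(partial Oxx i x) dOxx //.
exact: (dressed_star_identity (mulVmx (uO x Dx)) (Oxz_Ozx x Dx) (Oxx_sym x Dx)
  (bet := fun k => beta k i x) erefl erefl).
Qed.
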